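(* Let $a^*=(a^*_1,\dots,a^*_n)\in A$ be an aggregate strong Nash equilibrium of the $n$-player objective game $G$. Then $a^*$ is stable under perfect observability, i.e. there exist $\mu\in\mathcal M(\Theta^n)$ and a stable configuration $(\mu,b)$ whose aggregate outcome is the point mass at $a^*$.
   Context: Objective game: $G=(N,A,\pi)$ is a finite $n$-player normal-form game, $N=\{1,\dots,n\}$, finite action sets $A_i$, $A=\prod_{i\in N}A_i$, material payoff (fitness) functions $\pi_i:A\to\mathbb{R}$, extended multilinearly to mixed profiles in $\prod_{i}\Delta(A_i)$; $\pi=(\pi_1,\dots,\pi_n)$. A strategy profile $x\in\prod_i\Delta(A_i)$ is an aggregate strong Nash equilibrium if for every $J\subseteq N$ and every $\sigma_J\in\prod_{j\in J}\Delta(A_j)$ with $\sigma_j\neq x_j$ for some $j\in J$, $\sum_{j\in J}\pi_j(x)>\sum_{j\in J}\pi_j(\sigma_J,x_{-J})$. Preference types: $\Theta=\mathbb{R}^A$ (utility functions on $A$, extended multilinearly to mixed profiles). $\mathcal{M}(\Theta^n)$ is the set of product distributions $\mu=\mu_1\times\dots\times\mu_n$ on $\Theta^n$ with each $\mu_i$ finitely supported; $\operatorname{supp}\mu=\prod_i\operatorname{supp}\mu_i$, $\mu(\theta)=\prod_i\mu_i(\theta_i)$, $\mu_{-i}(\theta_{-i})=\prod_{j\neq i}\mu_j(\theta_j)$. Mutants: for nonempty $J\subseteq N$, a mutant sub-profile is $\tilde\theta_J\in\prod_{j\in J}(\Theta\setminus\operatorname{supp}\mu_j)$ with shares $\varepsilon=(\varepsilon_j)_{j\in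 J}\in(0,1)^{|J|}$, $\|\varepsilon\|=\max_j\varepsilon_j$; the post-entry distribution $\tilde\mu^\varepsilon$ has $\tilde\mu^\varepsilon_i=(1-\varepsilon_i)\mu_i+\varepsilon_i\delta_{\tilde\theta_i}$ for $i\in J$ and $\tilde\mu^\varepsilon_i=\mu_i$ otherwise. Perfect observability: for $\mu\in\mathcal M(\Theta^n)$, an equilibrium is a map $b:\operatorname{supp}\mu\to\prod_i\Delta(A_i)$ such that for each $\theta$, $b(\theta)$ is a Nash equilibrium of the normal-form game with action sets $A_i$ and payoffs $\theta_1,\dots,\theta_n$; $B_1(\mu)$ is the set of these; $(\mu,b)$ with $b\in B_1(\mu)$ is a configuration, with aggregate outcome $\varphi_{\mu,b}(a)=\sum_{\theta\in\operatorname{supp}\mu}\mu(\theta)\prod_{i}b_i(\theta)(a_i)$. Average fitness of $\theta_i\in\operatorname{supp}\mu_i$: $\Pi_{\theta_i}(\mu;b)=\sum_{\theta'_{-i}\in\operatorname{supp}\mu_{-i}}\mu_{-i}(\theta'_{-i})\pi_i(b(\theta_i,\theta'_{-i}))$. $(\mu,b)$ is balanced if for each $i$ all types in $\operatorname{supp}\mu_i$ have equal average fitness. Focal set: $B_1(\tilde\mu^\varepsilon;b)=\{\tilde b\in B_1(\tilde\mu^\varepsilon):\tilde b(\theta)=b(\theta)\ \forall\theta\in\operatorname{supp}\mu\}$. $(\mu,b)$ is stable if it is balanced and for every nonempty $J\subseteq N$ and every mutant sub-profile $\tilde\theta_J$ there is $\bar\epsilon\in(0,1)$ such that for every $\varepsilon\in(0,1)^{|J|}$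 with $\|\varepsilon\|<\bar\epsilon$ and every $\tilde b\in B_1(\tilde\mu^\varepsilon;b)$, either (i) there is $j\in J$ with $\Pi_{\theta_j}(\tilde\mu^\varepsilon;\tilde b)>\Pi_{\tilde\theta_j}(\tilde\mu^\varepsilon;\tilde b)$ for all $\theta_j\in\operatorname{supp}\mu_j$, or (ii) for every $i\in N$ all types in $\operatorname{supp}\tilde\mu^\varepsilon_i$ have equal average fitness under $(\tilde\mu^\varepsilon,\tilde b)$. *)

From HB Require Import structures.
From mathcomp Require Import all_boot all_order all_algebra.
Set Implicit Arguments. Unset Strict Implicit. Unset Printing Implicit Defensive.
Import Order.TTheory GRing.Theory Num.Theory.
Local Open Scope ring_scope.

Section Game.
Variables (R : realFieldType) (n : nat) (A : 'I_n -> finType).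

Definition prof := {dffun forall i : 'I_n, A i}.

Definition mstrat (i : 'I_n) := {ffun A i -> R}.
Definition mprof := forall i : 'I_n, mstrat i.

Definition is_mixed (i : 'I_n) (p : mstrat i) : Prop :=
  (forall a, 0 <= p a) /\ \sum_(a : A i) p a = 1.

Definition is_mprof (x : mprof) : Prop := forall i, is_mixed (x i).

Definition EU (u : prof -> R) (x : mprof) : R :=
  \sum_(a : prof) (\prod_(i < n) x i (a i)) * u a.

Definition pure_mix (a : prof) : mprof :=
  fun i => [ffun c : A i => if c == a i then 1 else 0].

Definition dev (J : {set 'I_n}) (sigma x : mprof) : mprof :=
  fun j => if j \in J then sigma j else x j.

Definition agg_strong_NE (pi : 'I_n -> prof -> R) (x : mprof) : Prop :=
  is_mprof x /\
  forall (J : {set 'I_n}) (sigma : mprof),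
    (forall j, j \in J -> is_mixed (sigma j)) ->
    (exists2 j, j \in J & sigma j != x j) ->
    \sum_(j in J) EU (pi j) (dev J sigma x) < \sum_(j in J) EU (pi j) x.

Definition Theta := {ffun prof -> R}.
Definition tprof := {ffun 'I_n -> Theta}.

Definition is_NE (th : tprof) (x : mprof) : Prop :=
  is_mprof x /\
  forall (i : 'I_n) (sigma : mprof), is_mixed (sigma i) ->
    EU (th i) (dev [set i] sigma x) <= EU (th i) x.

(* a finitely supported distribution mu_i on Theta: support psupp, weights pw *)
Record pop := Pop { psupp : seq Theta ; pw : Theta -> R }.

Definition valid_pop (p : pop) : Prop :=
  [/\ uniq (psupp p), (forall t, t \in psupp p -> 0 < pw p t)
    & \sum_(t <- psupp p) pw p t = 1].

(* product distribution mu = mu_1 x ... x mu_n *)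
Definition dist := 'I_n -> pop.
Definition valid_dist (mu : dist) : Prop := forall i, valid_pop (mu i).

Definition in_supp (mu : dist) (th : tprof) : Prop :=
  forall i, th i \in psupp (mu i).

(* enumeration of supp mu as a finite type *)
Definition suppT (mu : dist) := {dffun forall j : 'I_n, seq_sub (psupp (mu j))}.
Definition tval (mu : dist) (k : suppT mu) : tprof := [ffun j => val (k j)].

Definition smap := tprof -> mprof.

Definition B1 (mu : dist) (b : smap) : Prop :=
  forall th, in_supp mu th -> is_NE th (b th).

Definition outcome (mu : dist) (b : smap) (a : prof) : R :=
  \sum_(k : suppT mu) (\prod_(i < n) pw (mu i) (val (k i)))
                      * \prod_(i < n) b (tval k) i (a i).

Definition avg_fit (pi : 'I_n -> prof -> R) (mu : dist) (b : smap)
    (i : 'I_n) (t : Theta) : R :=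
  \sum_(k : suppT mu | val (k i) == t)
     (\prod_(j < n | j != i) pw (mu j) (val (k j))) * EU (pi i) (b (tval k)).

Definition balanced (pi : 'I_n -> prof -> R) (mu : dist) (b : smap) : Prop :=
  forall i t t', t \in psupp (mu i) -> t' \in psupp (mu i) ->
    avg_fit pi mu b i t = avg_fit pi mu b i t'.

Definition post_entry (mu : dist) (J : {set 'I_n}) (mt : 'I_n -> Theta)
    (eps : 'I_n -> R) : dist :=
  fun i => if i \in J then
     Pop (rcons (psupp (mu i)) (mt i))
         (fun t => if t == mt i then eps i else (1 - eps i) * pw (mu i) t)
   else mu i.

Definition focal (mu : dist) (b bt : smap) : Prop :=
  forall th, in_supp mu th -> forall i, bt th i = b th i.

Definition stable (pi : 'I_n -> prof -> R) (mu : dist) (b : smap) : Prop :=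
  balanced pi mu b /\
  forall (J : {set 'I_n}) (mt : 'I_n -> Theta),
    J != set0 ->
    (forall j, j \in J -> mt j \notin psupp (mu j)) ->
    exists eb : R, [/\ 0 < eb, eb < 1 &
      forall (eps : 'I_n -> R) (bt : smap),
        (forall j, j \in J -> 0 < eps j /\ eps j < eb) ->
        B1 (post_entry mu J mt eps) bt ->
        focal mu b bt ->
        (exists2 j, j \in J &
           forall t, t \in psupp (mu j) ->
             avg_fit pi (post_entry mu J mt eps) bt j (mt j)
               < avg_fit pi (post_entry mu J mt eps) bt j t)
        \/ balanced pi (post_entry mu J mt eps) bt].

End Game.

From Pilot Require Import Defs.
From HB Require Import structures.
From mathcomp Require Import all_boot all_order all_algebra.
From mathcomp Require Import lra ring.
Set Implicit Arguments. Unset Strict Implicit. Unset Printing Implicit Defensive.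
Import Order.TTheory GRing.Theory Num.Theory.
Local Open Scope ring_scope.

(* Populate every position i with the single commitment type
   theta_i(a) = [a_i = astar_i], for which astar_i is strictly dominant:
   in every equilibrium after entry the residents play astar, so only mutants
   deviate.  As A is finite, aggregate strong Nash equilibrium gives a margin
   c > 0 by which every coalition of pure deviators loses in aggregate,
   relative to the total payoff displacement.  For mutant shares below c,
   sum_j eps_j (1 - eps_j) (Pi_mutant_j - Pi_resident_j) is an average, over
   the type profiles, of the deviating coalition's aggregate gain minus
   sum_j eps_j (gain of j), hence nonpositive.  So either some mutant is
   strictly outperformed, or every gap vanishes and balance holds. *)

Lemma bigA_distr_dffun (R : comNzRingType) (I : finType) (T_ : I -> finType)
    (F : forall i, T_ i -> R) :
  \prod_i \sum_(c : T_ i) F i c = \sum_(a : {dffun forall i, T_ i}) \prod_i F i (a i).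
Proof.
pose P_ i := [ffun c : T_ i => F i c].
transitivity (\prod_i \sum_(j in tagged_with T_ i) untag 0 (P_ i) j).
  apply: eq_bigr => i _; rewrite -(big_tag (fun i c => P_ i c)).
  by apply: eq_bigr => c _; rewrite ffunE.
rewrite bigA_distr_big_dep -(big_fprod _ _ P_) /=.
rewrite (reindex (@fprod_of_dffun I T_)); last exact/onW_bij/fprod_of_dffun_bij.
apply: eq_bigr => a _; apply: eq_bigr => i _.
by rewrite /fprod_of_dffun fprodE ffunE.
Qed.

Lemma big_seq_sub (R : nmodType) (T : choiceType) (s : seq T) (f : T -> R) :
  uniq s -> \sum_(x : seq_sub s) f (val x) = \sum_(t <- s) f t.
Proof.
move=> Us; rewrite -(big_map val xpredT f); congr (bigop _ _ _).
by rewrite /index_enum !unlock /=; exact: val_seq_sub_enum.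
Qed.

Section MixedProfiles.
Variables (R : realFieldType) (n : nat) (A : 'I_n -> finType).
Implicit Types (a b : prof A) (x y : mprof R A) (u : prof A -> R).

Lemma prof_neq_exists a b : a != b -> exists i, a i != b i.
Proof.
move=> ne; apply/existsP; apply: contraNT ne; rewrite negb_exists => /forallP H.
by apply/eqP/ffunP => i; apply/eqP/negPn.
Qed.

Lemma eq_EU u x y : (forall i, x i =1 y i) -> EU u x = EU u y.
Proof.
by move=> xy; apply: eq_bigr => a _; congr (_ * _); apply: eq_bigr => i _; rewrite xy.
Qed.

Lemma prod_pure_mix b a : \prod_i pure_mix R b i (a i) = (a == b)%:R.
Proof.
have [-> | /prof_neq_exists [i abi]] := eqVneq a b.
  by rewrite big1 // => i _; rewrite ffunE eqxx.
by rewrite (bigD1 i) //= ffunE (negbTE abi) mul0r.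
Qed.

Lemma EU_pure_mix u b : EU u (pure_mix R b) = u b.
Proof.
rewrite /EU (bigD1 b) //= prod_pure_mix eqxx mul1r big1 ?addr0 // => a /negbTE ab.
by rewrite prod_pure_mix ab mul0r.
Qed.

Lemma is_mixed_pure_mix b i : is_mixed (pure_mix R b i).
Proof.
split=> [c|]; first by rewrite ffunE; case: eqP.
rewrite (bigD1 (b i)) //= ffunE eqxx big1 ?addr0 // => c /negbTE cb.
by rewrite ffunE cb.
Qed.

Lemma is_mixed_le1 i (p : mstrat R A i) c : is_mixed p -> p c <= 1.
Proof. by case=> p_ge0 <-; rewrite (bigD1 c) //= lerDl sumr_ge0. Qed.

Lemma is_mprof_dev (J : {set 'I_n}) (sigma x : mprof R A) :
  is_mprof x -> (forall j, j \in J -> is_mixed (sigma j)) ->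
  is_mprof (dev J sigma x).
Proof. by move=> Hx Hs i; rewrite /dev; case: ifP => iJ; [apply: Hs | apply: Hx]. Qed.

Lemma sum_prod_mprof x : is_mprof x -> \sum_(a : prof A) \prod_i x i (a i) = 1.
Proof.
by move=> Hx; rewrite -(bigA_distr_dffun (fun i c => x i c)) big1 // => i _; case: (Hx i).
Qed.

Lemma EU_subr u x b : is_mprof x ->
  EU u x - u b = \sum_(a : prof A) (\prod_i x i (a i)) * (u a - u b).
Proof.
by move=> Hx; under eq_bigr do rewrite mulrBr; rewrite sumrB -mulr_suml sum_prod_mprof ?mul1r.
Qed.

End MixedProfiles.

Arguments prod_pure_mix {R n A} b a.
Arguments is_mixed_pure_mix {R n A} b i.

Section CommitmentTypes.
Variables (R : realFieldType) (n : nat) (A : 'I_n -> finType) (astar : prof A).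
Local Notation pa := (pure_mix R astar).

Definition commit_type i : Theta R A := [ffun a : prof A => (a i == astar i)%:R].

Lemma EU_commit_type (x : mprof R A) i :
  is_mprof x -> EU (commit_type i) x = x i (astar i).
Proof.
move=> Hx.
pose F k (c : A k) := x k c * (if k == i then (c == astar k)%:R else 1).
transitivity (\sum_(a : prof A) \prod_k F k (a k)).
  apply: eq_bigr => a _; rewrite big_split /= -big_mkcond big_pred1_eq ffunE //.
rewrite -bigA_distr_dffun (bigD1 i) //= [X in _ * X]big1 ?mulr1; last first.
  by move=> k /negbTE ki; rewrite /F; under eq_bigr do rewrite ki mulr1; case: (Hx k).
rewrite /F (bigD1 (astar i)) //= !eqxx mulr1 big1 ?addr0 // => c /negbTE ->.
by rewrite mulr0.
Qed.

(* A player of commitment type gets 1 exactly when it plays astar i, so any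
   mass elsewhere could be moved to astar i at a strict gain. *)
Lemma NE_commit_type (th : tprof R A) (x : mprof R A) i :
  is_NE th x -> th i = commit_type i -> x i = pa i.
Proof.
case=> Hx HNE thi.
have Hd : is_mprof (dev [set i] pa x).
  by apply: is_mprof_dev => // j _; exact: is_mixed_pure_mix.
have := HNE i pa (is_mixed_pure_mix astar i).
rewrite thi !EU_commit_type // /dev set11 ffunE eqxx => xa1.
have {xa1} xa : x i (astar i) = 1 by apply/le_anti; rewrite xa1 is_mixed_le1.
case: (Hx i) => x_ge0; rewrite (bigD1 (astar i)) //= xa => /eqP.
rewrite -subr_eq0 addrAC subrr add0r => /eqP/psumr_eq0P x0.
apply/ffunP => c; rewrite ffunE; case: eqP => [-> // | /eqP ca].
exact: x0.
Qed.

Lemma NE_pure_commit_types (th : tprof R A) :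
  (forall i, th i = commit_type i) -> is_NE th pa.
Proof.
move=> th_commit; split=> [i|i sigma Hs]; first exact: is_mixed_pure_mix.
have Hd : is_mprof (dev [set i] sigma pa).
  apply: is_mprof_dev => [j|j]; first exact: is_mixed_pure_mix.
  by rewrite inE => /eqP ->.
rewrite th_commit !EU_commit_type //; last by move=> j; exact: is_mixed_pure_mix.
by rewrite /dev set11 ffunE eqxx is_mixed_le1.
Qed.

End CommitmentTypes.

Section AggregateMargin.
Variables (R : realFieldType) (n : nat) (A : 'I_n -> finType).
Variables (pi : 'I_n -> prof A -> R) (astar : prof A).
Local Notation pa := (pure_mix R astar).

Definition agrees_off (K : {set 'I_n}) (a : prof A) := forall i, i \notin K -> a i = astar i.

(* The margin has to dominate every player's payoff change, not only the
   coalition's, since mutants at positions outside K still count with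
   weight eps. *)
Definition agg_margin (c : R) := forall (K : {set 'I_n}) (a : prof A),
  agrees_off K a -> a != astar ->
  c * \sum_j `|pi j a - pi j astar| <= \sum_(j in K) (pi j astar - pi j a).

Lemma agrees_offP (K : {set 'I_n}) (a : prof A) :
  reflect (agrees_off K a) [forall i, (i \notin K) ==> (a i == astar i)].
Proof.
apply: (iffP forallP) => [Ka i iK | Ka i]; last by apply/implyP => /Ka ->.
exact/eqP/(implyP (Ka i)).
Qed.

Lemma agg_strong_NE_pure_loss (K : {set 'I_n}) (a : prof A) :
  agg_strong_NE pi pa -> agrees_off K a -> a != astar ->
  0 < \sum_(j in K) (pi j astar - pi j a).
Proof.
case=> _ aNE Ka /prof_neq_exists [i ai].
have iK : i \in K by apply: contraT => /Ka ai'; rewrite ai' eqxx in ai.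
have dev_a : pure_mix R a i != pa i.
  apply: contraNneq ai => /ffunP/(_ (a i)); rewrite !ffunE eqxx.
  by case: eqP => // _ /eqP; rewrite oner_eq0.
have := aNE K (pure_mix R a) (fun j _ => is_mixed_pure_mix a j) (ex_intro2 _ _ i iK dev_a).
have E u : EU u (dev K (pure_mix R a) pa) = u a.
  rewrite -(EU_pure_mix u a); apply: eq_EU => j c; rewrite /dev.
  by case: ifP => // /negbT /Ka; rewrite !ffunE => ->.
under eq_bigr do rewrite E.
under [X in _ < X]eq_bigr do rewrite EU_pure_mix.
by rewrite sumrB subr_gt0.
Qed.

Lemma agg_strong_NE_margin : agg_strong_NE pi pa ->
  exists2 c : R, 0 < c <= 1/2 & agg_margin c.
Proof.
move=> aNE.
pose P (Ka : {set 'I_n} * prof A) := [forall i, (i \notin Ka.1) ==> (Ka.2 i == astar i)]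
  && (Ka.2 != astar).
pose f (Ka : {set 'I_n} * prof A) := (\sum_(j in Ka.1) (pi j astar - pi j Ka.2))
  / (\sum_j `|pi j Ka.2 - pi j astar| + 1).
have norm_pos (a : prof A) : 0 < \sum_j `|pi j a - pi j astar| + 1.
  by rewrite ltr_wpDl ?ltr01 // sumr_ge0.
pose c := \big[Order.min/(1/2)]_(Ka | P Ka) f Ka.
have c_pos : 0 < c.
  apply: lt_bigmin => [|[K a] /andP [/agrees_offP Ka ne]]; first by rewrite divr_gt0 ?ltr01.
  by rewrite divr_gt0 // agg_strong_NE_pure_loss.
exists c; first by rewrite c_pos bigmin_le_id.
move=> K a Ka ne.
have : c <= f (K, a) by apply: bigmin_le_cond; rewrite /P /= ne andbT; apply/agrees_offP.
rewrite /f /= ler_pdivlMr // mulrDr mulr1.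
lra.
Qed.

Section Deviations.
Variables (c : R) (eps : 'I_n -> R) (J K : {set 'I_n}).
Hypotheses (margin_c : agg_margin c) (c_ge0 : 0 <= c).
Hypothesis eps_le_c : forall j, j \in J -> 0 <= eps j <= c.

Lemma pure_deviation_gain_le0 (a : prof A) : agrees_off K a ->
  \sum_(j in K) (pi j a - pi j astar) - \sum_(j in J) eps j * (pi j a - pi j astar) <= 0.
Proof.
move=> Ka; have [-> | ne] := eqVneq a astar.
  by rewrite !big1 ?subrr // => j _; rewrite subrr ?mulr0.
have loss := margin_c Ka ne.
have eps_gain : - \sum_(j in J) eps j * (pi j a - pi j astar)
    <= c * \sum_j `|pi j a - pi j astar|.
  rewrite -sumrN mulr_sumr.
  apply: (@le_trans _ _ (\sum_(j in J) c * `|pi j a - pi j astar|)).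
    apply: ler_sum => j jJ; case/andP: (eps_le_c jJ) => e0 ec.
    rewrite (le_trans (ler_norm _)) // normrN normrM (ger0_norm e0).
    exact: ler_wpM2r.
  by rewrite [X in _ <= X](bigID (mem J)) /= lerDl sumr_ge0 // => j _; rewrite mulr_ge0.
have opp_loss : \sum_(j in K) (pi j a - pi j astar) = - \sum_(j in K) (pi j astar - pi j a).
  by rewrite -sumrN; apply: eq_bigr => j _; rewrite opprB.
lra.
Qed.

(* The gain is linear in the profile, and every pure profile in the support
   of x agrees with astar off K. *)
Lemma mixed_deviation_gain_le0 (x : mprof R A) :
  is_mprof x -> (forall i, i \notin K -> x i = pa i) ->
  \sum_(j in K) (EU (pi j) x - pi j astar)
    - \sum_(j in J) eps j * (EU (pi j) x - pi j astar) <= 0.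
Proof.
move=> Hx xK.
under eq_bigr do rewrite EU_subr //.
under [X in _ - X]eq_bigr do rewrite EU_subr // mulr_sumr.
rewrite [X in X - _]exchange_big [X in _ - X]exchange_big /= -sumrB.
apply: sumr_le0 => a _.
have w_ge0 : 0 <= \prod_i x i (a i) by apply: prodr_ge0 => i _; case: (Hx i).
have [/agrees_offP Ka | /forallPn [i]] := boolP [forall i, (i \notin K) ==> (a i == astar i)].
  rewrite -mulr_sumr; under [X in _ - X]eq_bigr do rewrite mulrCA.
  by rewrite -mulr_sumr -mulrBr mulr_ge0_le0 // pure_deviation_gain_le0.
rewrite negb_imply => /andP [iK ai].
have -> : \prod_i x i (a i) = 0 by rewrite (bigD1 i) //= xK // ffunE (negbTE ai) mul0r.
under eq_bigr do rewrite mul0r.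
under [X in _ - X]eq_bigr do rewrite mul0r mulr0.
by rewrite !big1_eq subrr.
Qed.

End Deviations.
End AggregateMargin.

Section Populations.
Variables (R : realFieldType) (n : nat) (A : 'I_n -> finType).
Implicit Types (mu : dist R A).

Definition type_weight mu (k : suppT mu) : R := \prod_i pw (mu i) (val (k i)).

Lemma in_supp_tval mu (k : suppT mu) : in_supp mu (Defs.tval k).
Proof. by move=> j; rewrite ffunE; exact: ssvalP. Qed.

Lemma sum_suppT_prod mu (F : 'I_n -> Theta R A -> R) :
  (forall i, uniq (psupp (mu i))) ->
  \sum_(k : suppT mu) \prod_i F i (val (k i)) = \prod_i \sum_(t <- psupp (mu i)) F i t.
Proof.
move=> Umu; rewrite -(bigA_distr_dffun (fun i (s : seq_sub (psupp (mu i))) => F i (val s))).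
by apply: eq_bigr => i _; exact: big_seq_sub.
Qed.

Lemma marginal_type_weight mu j t : valid_dist mu -> t \in psupp (mu j) ->
  \sum_(k : suppT mu | val (k j) == t) type_weight k = pw (mu j) t.
Proof.
move=> Vmu tj; pose F i s := pw (mu i) s * (if i == j then (s == t)%:R else 1).
transitivity (\sum_(k : suppT mu) \prod_i F i (val (k i))).
  rewrite big_mkcond; apply: eq_bigr => k _; rewrite big_split /= -big_mkcond.
  by rewrite big_pred1_eq; case: eqP; rewrite ?mulr1 ?mulr0.
rewrite sum_suppT_prod => [|i]; last by case: (Vmu i).
rewrite (bigD1 j) //= [X in _ * X]big1 ?mulr1; last first.
  by move=> i /negbTE ij; rewrite /F ij; under eq_bigr do rewrite mulr1; case: (Vmu i).
rewrite /F eqxx; under eq_bigr do rewrite mulr_natr mulrb.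
case: (Vmu j) => Uj _ _.
by rewrite -big_mkcond -big_filter (filter_pred1_uniq Uj tj) big_seq1.
Qed.

Lemma weighted_avg_fit (pi : 'I_n -> prof A -> R) mu (b : smap R A) j t :
  pw (mu j) t * avg_fit pi mu b j t
  = \sum_(k : suppT mu | val (k j) == t) type_weight k * EU (pi j) (b (Defs.tval k)).
Proof.
rewrite /avg_fit mulr_sumr; apply: eq_bigr => k /eqP kj.
by rewrite /type_weight [in RHS](bigD1 j) //= kj mulrA.
Qed.

Lemma valid_post_entry mu (J : {set 'I_n}) (mt : 'I_n -> Theta R A) (eps : 'I_n -> R) :
  valid_dist mu -> (forall j, j \in J -> 0 < eps j < 1) ->
  (forall j, j \in J -> mt j \notin psupp (mu j)) ->
  valid_dist (post_entry mu J mt eps).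
Proof.
move=> Vmu eps01 mt_new i; rewrite /post_entry; case: ifP => iJ //.
have [Ui pw_gt0 pw_sum1] := Vmu i; have /andP [e0 e1] := eps01 i iJ.
have mt_i := mt_new i iJ.
split=> /=.
- by rewrite rcons_uniq mt_i.
- move=> t; rewrite mem_rcons inE; case: eqP => // _ /pw_gt0 t0.
  by rewrite mulr_gt0 // subr_gt0.
- rewrite big_rcons /= eqxx big_seq (eq_bigr (fun t => (1 - eps i) * pw (mu i) t)).
    by rewrite -mulr_sumr -big_seq pw_sum1 mulr1 subrK.
  by move=> t ti; case: eqP => // tm; rewrite -tm ti in mt_i.
Qed.

End Populations.

Section Stability.
Variables (R : realFieldType) (n : nat) (A : 'I_n -> finType).
Variables (pi : 'I_n -> prof A -> R) (astar : prof A).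
Local Notation pa := (pure_mix R astar).
Local Notation commit := (commit_type R astar).

Definition commit_dist : dist R A := fun i => Pop [:: commit i] (fun _ => 1).
Definition pure_smap : smap R A := fun _ => pa.

Lemma valid_commit_dist : valid_dist commit_dist.
Proof. by move=> i; split=> //=; rewrite big_seq1. Qed.

Section Entry.
Variables (J : {set 'I_n}) (mt : 'I_n -> Theta R A) (eps : 'I_n -> R).
Hypothesis mt_new : forall j, j \in J -> mt j \notin psupp (commit_dist j).
Hypothesis eps01 : forall j, j \in J -> 0 < eps j < 1.
Local Notation mu := (post_entry commit_dist J mt eps).

Lemma commit_neq_mutant j : j \in J -> (commit j == mt j) = false.
Proof. by move/mt_new; rewrite inE eq_sym => /negbTE. Qed.

Lemma post_entry_pw_commit j : j \in J -> pw (mu j) (commit j) = 1 - eps j.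
Proof. by move=> jJ; rewrite /post_entry jJ /= commit_neq_mutant // mulr1. Qed.

Lemma post_entry_pw_mutant j : j \in J -> pw (mu j) (mt j) = eps j.
Proof. by move=> jJ; rewrite /post_entry jJ /= eqxx. Qed.

Lemma post_entry_supp i t : t \in psupp (mu i) -> t = commit i \/ (i \in J /\ t = mt i).
Proof.
rewrite /post_entry; case: ifP => iJ /=.
  by rewrite !inE => /orP [/eqP | /eqP]; [left | right].
by rewrite inE => /eqP; left.
Qed.

Variable bt : smap R A.
Hypothesis Bbt : B1 mu bt.

Lemma committed_play (k : suppT mu) i : val (k i) = commit i -> bt (Defs.tval k) i = pa i.
Proof.
move=> ki; apply: (NE_commit_type (Bbt (in_supp_tval k))).
by rewrite ffunE ki.
Qed.

(* The fitness gap of the j-th mutant is a covariance between being a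
   mutant at j and the payoff of j, which lets one recentre the payoffs at
   pi j astar. *)
Lemma fitness_gap_weighted j : j \in J ->
  eps j * (1 - eps j) * (avg_fit pi mu bt j (mt j) - avg_fit pi mu bt j (commit j)) =
  \sum_(k : suppT mu) type_weight k * ((val (k j) == mt j)%:R - eps j)
                      * (EU (pi j) (bt (Defs.tval k)) - pi j astar).
Proof.
move=> jJ; pose G (k : suppT mu) := EU (pi j) (bt (Defs.tval k)).
have Vmu := valid_post_entry valid_commit_dist eps01 mt_new.
have supp_j : psupp (mu j) = [:: commit j; mt j] by rewrite /post_entry jJ.
have mass t : t \in psupp (mu j) ->
    \sum_(k : suppT mu | val (k j) == t) type_weight k * (G k - pi j astar)
    = pw (mu j) t * avg_fit pi mu bt j t - pw (mu j) t * pi j astar.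
  move=> tj; rewrite weighted_avg_fit -(marginal_type_weight Vmu tj) mulr_suml -sumrB.
  by apply: eq_bigr => k _; rewrite mulrBr.
have hm := mass (mt j) ltac:(by rewrite supp_j !inE eqxx orbT).
have hc := mass (commit j) ltac:(by rewrite supp_j !inE eqxx).
rewrite post_entry_pw_mutant // in hm; rewrite post_entry_pw_commit // in hc.
pose F (k : suppT mu) := type_weight k * (G k - pi j astar).
have mutants : \sum_(k : suppT mu | val (k j) == mt j)
    type_weight k * ((val (k j) == mt j)%:R - eps j) * (G k - pi j astar)
    = (1 - eps j) * \sum_(k : suppT mu | val (k j) == mt j) F k.
  by rewrite mulr_sumr; apply: eq_bigr => k ->; rewrite /F mulrCA mulrA.
have residents : \sum_(k : suppT mu | val (k j) != mt j)
    type_weight k * ((val (k j) == mt j)%:R - eps j) * (G k - pi j astar)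
    = - eps j * \sum_(k : suppT mu | val (k j) == commit j) F k.
  rewrite mulr_sumr; apply: eq_big => [k | k /negbTE ->].
    case: (post_entry_supp (valP (k j))) => [-> | [_ ->]].
      by rewrite commit_neq_mutant ?eqxx.
    by rewrite eqxx eq_sym commit_neq_mutant.
  by rewrite /F sub0r mulrCA mulrA.
rewrite (bigID (fun k : suppT mu => val (k j) == mt j)) /= mutants residents hm hc; ring.
Qed.

Lemma sum_fitness_gap_le0 (c : R) :
  agg_margin pi astar c -> 0 <= c -> (forall j, j \in J -> eps j <= c) ->
  \sum_(j in J) eps j * (1 - eps j)
    * (avg_fit pi mu bt j (mt j) - avg_fit pi mu bt j (commit j)) <= 0.
Proof.
move=> margin_c c_ge0 eps_le_c.
under eq_bigr => j jJ do rewrite fitness_gap_weighted //.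
rewrite exchange_big /=; apply: sumr_le0 => k _.
have Vmu := valid_post_entry valid_commit_dist eps01 mt_new.
have W_ge0 : 0 <= type_weight k.
  by apply: prodr_ge0 => i _; case: (Vmu i) => _ pw_gt0 _; rewrite ltW ?pw_gt0 ?ssvalP.
under eq_bigr do rewrite -mulrA.
rewrite -mulr_sumr mulr_ge0_le0 //.
pose K := [set i in J | val (k i) == mt i].
have -> : \sum_(i in J) ((val (k i) == mt i)%:R - eps i)
            * (EU (pi i) (bt (Defs.tval k)) - pi i astar)
    = \sum_(i in K) (EU (pi i) (bt (Defs.tval k)) - pi i astar)
      - \sum_(i in J) eps i * (EU (pi i) (bt (Defs.tval k)) - pi i astar).
  under eq_bigr do rewrite mulrBl; rewrite sumrB; congr (_ - _).
  rewrite [RHS](eq_bigl (fun i => (i \in J) && (val (k i) == mt i))) => [|i]; last first.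
    by rewrite inE.
  by rewrite big_mkcondr /=; apply: eq_bigr => i _; case: eqP; rewrite ?mul1r ?mul0r.
apply: (mixed_deviation_gain_le0 margin_c c_ge0) => [j jJ | | i].
- by have /andP [e0 _] := eps01 jJ; rewrite ltW // eps_le_c.
- by case: (Bbt (in_supp_tval k)).
- rewrite inE negb_and => Ki; apply: committed_play.
  by case: (post_entry_supp (valP (k i))) => // -[iJ ki]; rewrite iJ ki eqxx in Ki.
Qed.

End Entry.

Lemma outcome_pure_smap (a : prof A) : outcome commit_dist pure_smap a = (a == astar)%:R.
Proof.
rewrite /outcome; under eq_bigr do rewrite prod_pure_mix.
rewrite -mulr_suml (sum_suppT_prod (fun i t => pw (commit_dist i) t)) //.
by rewrite big1 ?mul1r // => i _; rewrite big_seq1.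
Qed.

Lemma stable_commit : agg_strong_NE pi pa -> stable pi commit_dist pure_smap.
Proof.
move=> aNE; have [c /andP [c_gt0 c_le]] := agg_strong_NE_margin aNE => margin_c.
split; first by move=> i t t'; rewrite !inE => /eqP -> /eqP ->.
move=> J mt _ mt_new; exists c; split=> //; first lra.
move=> eps bt eps_lt Bbt _.
have eps01 j : j \in J -> 0 < eps j < 1.
  by case/eps_lt => e0 ec; rewrite e0 /=; lra.
pose mu := post_entry commit_dist J mt eps.
pose gap j := avg_fit pi mu bt j (mt j) - avg_fit pi mu bt j (commit j).
have [/exists_inP [j jJ] | /exists_inPn gap_ge0] := boolP [exists j in J, gap j < 0].
  rewrite subr_lt0 => worse; left; exists j => // t.
  by rewrite inE => /eqP ->.
right.
have terms_ge0 j : j \in J -> 0 <= eps j * (1 - eps j) * gap j.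
  move=> jJ; have /andP [e0 e1] := eps01 j jJ.
  apply: mulr_ge0; first by rewrite mulr_ge0 ?subr_ge0 ?ltW.
  by rewrite leNgt gap_ge0.
have fit_eq j : j \in J -> avg_fit pi mu bt j (mt j) = avg_fit pi mu bt j (commit j).
  move=> jJ; have /andP [e0 e1] := eps01 j jJ.
  have /eqP : eps j * (1 - eps j) * gap j = 0.
    apply: (psumr_eq0P terms_ge0) => //; apply/le_anti; rewrite sumr_ge0 // andbT.
    by apply: (sum_fitness_gap_le0 mt_new eps01 Bbt margin_c (ltW c_gt0)) => i /eps_lt [_ /ltW].
  by rewrite !mulf_eq0 gt_eqF // subr_eq0 gt_eqF //= subr_eq0 => /eqP.
move=> i t t' /post_entry_supp [-> | [? ->]] /post_entry_supp [-> | [? ->]] //.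
- by rewrite fit_eq.
- by rewrite fit_eq.
Qed.

End Stability.

Theorem mainTheorem5 (R : realFieldType) (n : nat) (A : 'I_n -> finType)
    (pi : 'I_n -> prof A -> R) (astar : prof A) :
  agg_strong_NE pi (pure_mix R astar) ->
  exists (mu : dist R A) (b : smap R A),
    [/\ valid_dist mu, B1 mu b, stable pi mu b
      & forall a : prof A, outcome mu b a = (a == astar)%:R].
Proof.
move=> aNE; exists (commit_dist R astar), (pure_smap astar); split.
- exact: valid_commit_dist.
- move=> th th_commit; apply: NE_pure_commit_types => i.
  by move: (th_commit i); rewrite inE => /eqP.
- exact: stable_commit.
- exact: outcome_pure_smap.
Qed.
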